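(* Let $n$ be a positive integer and $\mathbf a\in\mathbb N^n$. For each $\mathbf j\in\{0,1\}^n$ with $\chi(\mathbf a)\trianglerighteq_1\mathbf j$, there exists a unique vector $\mathbf b\in\mathbb N^n$ with $\chi(\mathbf b)=\mathbf j$ such that $\mathcal F_{H_\top(n)}(\mathbf a,\mathbf b)$ contains an unsplittable flow; moreover, in that case $\mathcal F_{H_\top(n)}(\mathbf a,\mathbf b)$ contains exactly one unsplittable flow. For all other vectors $\mathbf b\in\mathbb N^n$ (i.e. those for which $\chi(\mathbf a)\trianglerighteq_1\chi(\mathbf b)$ fails, or which are not this unique vector for $\mathbf j=\chi(\mathbf b)$), $\mathcal F_{H_\top(n)}(\mathbf a,\mathbf b)$ has no unsplittable flows.
   Context: $H_\top(n)$ is the directed graph with vertices $(i,-1),(i,0),(i,1)$ for $1\le i\le n$ and a vertex $s$, and arcs $((i,-1),(i,0))$ and $((i,0),(i,1))$ for $1\le i\le n$, $((i,0),(i+1,0))$ for $1\le i\le n-1$, and $((n,0),s)$. $\mathcal F_{H_\top(n)}(\mathbf a,\mathbf b)$ is the set of nonnegative real arc weightings such that at each vertex outflow minus inflow equals its netflow: $a_i$ at $(i,-1)$, $-b_i$ at $(i,1)$, $0$ at $(i,0)$, and $-\sum_ia_i+\sum_ib_i$ at $s$. An unsplittable flow is an integral flow in which no two unit trajectories split; equivalently, an integral flow in which every vertex has at most one outgoing arc with positive flow and no vertex with negative netflow has an outgoing arc with positive flow. $\chi(\mathbf v)_i=1$ if $v_i>0$, else $0$. Dominance $\mathbf v\trianglerighteq\mathbf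 w$: $\sum_{k\le i}v_k\ge\sum_{k\le i}w_k$ for all $i$. For $\mathbf v\trianglerighteq\mathbf w$ with $\chi(\mathbf v)\trianglerighteq\chi(\mathbf w)$, let $Z_{\mathbf v}=\{i:v_i=0\}$, $Z_{\mathbf w}=\{i:w_i=0\}$ and form the matching $M$ by repeatedly matching the largest unmatched $i'\in Z_{\mathbf v}$ to the largest unmatched element of $Z_{\mathbf w}$ that is $\le i'$; $\mathbf v\trianglerighteq_1\mathbf w$ means $\mathbf v\trianglerighteq\mathbf w$, $\chi(\mathbf v)\trianglerighteq\chi(\mathbf w)$ and $i-j\le1$ for all $(i,j)\in M$. *)

From HB Require Import structures.
From mathcomp Require Import all_boot all_order all_algebra.
From mathcomp Require Import reals.
Set Implicit Arguments. Unset Strict Implicit. Unset Printing Implicit Defensive.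
Import Order.TTheory GRing.Theory Num.Theory.
Local Open Scope ring_scope.

Definition chi (n : nat) (v : 'I_n -> nat) : 'I_n -> nat :=
  fun i => nat_of_bool (0 < v i)%N.

Definition dom (n : nat) (v w : 'I_n -> nat) : Prop :=
  forall i : 'I_n,
    (\sum_(k < n | (k <= i)%N) w k <= \sum_(k < n | (k <= i)%N) v k)%N.

Definition zeros_dec (n : nat) (v : 'I_n -> nat) : seq nat :=
  rev [seq val i | i <- enum 'I_n & v i == 0%N].

(* Greedy matching: take the largest unmatched i' of Z_v (zv is decreasing)
   and match it to the largest unmatched element of Z_w that is <= i'.
   (If no such element exists -- which cannot happen under the standing
   hypothesis chi v |> chi w -- i' is left unmatched.) *)
Fixpoint gmatch (zv zw : seq nat) : seq (nat * nat) :=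
  match zv with
  | [::] => [::]
  | i :: zv' =>
      let c := [seq j <- zw | (j <= i)%N] in
      if c is [::] then gmatch zv' zw
      else let j := (\max_(k <- c) k)%N in (i, j) :: gmatch zv' (rem j zw)
  end.

Definition matchM (n : nat) (v w : 'I_n -> nat) : seq (nat * nat) :=
  gmatch (zeros_dec v) (zeros_dec w).

Definition dom1 (n : nat) (v w : 'I_n -> nat) : Prop :=
  [/\ dom v w, dom (chi v) (chi w) &
      forall p, p \in matchM v w -> (p.1 - p.2 <= 1)%N].

(* Vertices: None = s ; Some (i, k) = (i+1, k-1) in the paper's notation
   (i : 'I_n is 0-based, k : 'I_3 encodes -1, 0, 1 as 0, 1, 2). *)
Definition Hvert (n : nat) : finType := option ('I_n * 'I_3)%type.

Definition Harc (n : nat) (u v : Hvert n) : bool :=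
  match u, v with
  | Some (i, k), Some (i', k') =>
      [|| (i == i') && (val k == 0%N) && (val k' == 1%N),
          (i == i') && (val k == 1%N) && (val k' == 2%N)
        | (val k == 1%N) && (val k' == 1%N) && (val i' == (val i).+1)]
  | Some (i, k), None => (val k == 1%N) && (val i == n.-1)
  | None, _ => false
  end.

Definition Hnet (R : realType) (n : nat) (a b : 'I_n -> nat) (v : Hvert n) : R :=
  match v with
  | Some (i, k) =>
      if val k == 0%N then (a i)%:R
      else if val k == 1%N then 0
      else - (b i)%:R
  | None => - (\sum_(i < n) a i)%:R + (\sum_(i < n) b i)%:R
  end.

Section Flows.
Variables (R : realType) (V : finType) (arc : rel V) (d : V -> R).

Definition netflow (f : V -> V -> R) (v : V) : R :=
  \sum_(w : V) f v w - \sum_(w : V) f w v.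

Definition is_flow (f : V -> V -> R) : Prop :=
  [/\ forall u v, 0 <= f u v,
      forall u v, ~~ arc u v -> f u v = 0
    & forall v, netflow f v = d v].

Definition integral (f : V -> V -> R) : Prop :=
  forall u v, exists k : nat, f u v = k%:R.

Definition unsplittable (f : V -> V -> R) : Prop :=
  [/\ is_flow f, integral f,
      forall v w1 w2, arc v w1 -> arc v w2 -> 0 < f v w1 -> 0 < f v w2 -> w1 = w2
    & forall v w, d v < 0 -> arc v w -> ~ (0 < f v w)].

End Flows.

Definition Hunspl (R : realType) (n : nat) (a b : 'I_n -> nat)
  (f : Hvert n -> Hvert n -> R) : Prop :=
  unsplittable (@Harc n) (Hnet R a b) f.

From HB Require Import structures.
From mathcomp Require Import all_boot all_order all_algebra.
From mathcomp Require Import reals.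
From mathcomp Require Import zify lra.
Set Implicit Arguments. Unset Strict Implicit. Unset Printing Implicit Defensive.
Import Order.TTheory GRing.Theory Num.Theory.

(* In [H_top(n)] every flow is forced: the arc out of [(i,-1)] carries [a_i],
   the arc into [(i,1)] carries [b_i], and the spine arc leaving [(i,0)]
   carries [A_i - B_i], the difference of prefix sums.  Hence an unsplittable
   flow exists iff these spine values are nonnegative and vanish wherever
   [b_i > 0], and it is then unique.  Cutting [1..n] after each 1 of [j] into
   blocks, such a [b] with support [j] exists iff every block ending at a 1 of
   [j] contains an [i] with [a_i > 0], and then [b_i] must be the [a]-mass of
   the block ending at [i].  For 0/1 vectors this covering condition is
   equivalent to [chi a |>_1 j]: the greedy matching, run from the right,
   matches each zero [i] of [chi a] to [i] when [i] is a free zero of [j] and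
   otherwise must go down to [i - 1], which it can exactly as long as the
   blocks are covered. *)

Section PrefixSums.
Implicit Types (w J : nat -> nat) (k x : nat).

Fixpoint psum w x : nat := if x is y.+1 then psum w y + w y else 0.

Lemma psumS w x : psum w x.+1 = psum w x + w x. Proof. by []. Qed.

Lemma eq_psum w w' x : (forall y, y < x -> w y = w' y) -> psum w x = psum w' x.
Proof. by elim: x => //= x IH E; rewrite E // IH // => y yx; apply: E; lia. Qed.

Lemma leq_psum w k x : k <= x -> psum w k <= psum w x.
Proof.
elim: x => [|x IH]; first by rewrite leqn0 => /eqP ->.
by rewrite leq_eqVlt ltnS => /predU1P[->|/IH /=] //; lia.
Qed.

Lemma psum_null_range w k x : (forall l, k <= l < x -> w l = 0) -> k <= x ->
  psum w x = psum w k.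
Proof.
elim: x => [|x IH] w0; first by rewrite leqn0 => /eqP ->.
rewrite leq_eqVlt ltnS => /predU1P[-> //|kx] /=.
rewrite IH ?w0 ?addn0 ?kx ?leqnn //.
by move=> l /andP[kl lx]; apply: w0; rewrite kl; lia.
Qed.

Lemma psum_lt_witness w k x : psum w k < psum w x -> exists l, k <= l < x /\ 0 < w l.
Proof.
elim: x => [|x IH] /=; first by have := @leq_psum w 0 k; lia.
case: (posnP (w x)) => [->|wx] lt.
  rewrite addn0 in lt; have [l [/andP[kl lx] wl]] := IH lt.
  by exists l; rewrite kl; split=> //; lia.
exists x; split=> //; rewrite ltnSn andbT.
by case: (leqP k x) => // /(leq_psum w); rewrite psumS; lia.
Qed.

Lemma psum_sum w x : psum w x = \sum_(y < x) w y.
Proof. by elim: x => [|x IH]; rewrite ?big_ord0 // big_ord_recr /= IH. Qed.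

Lemma psum_le_len w x : (forall y, w y <= 1) -> psum w x <= x.
Proof. by move=> w01; elim: x => //= x IH; have := w01 x; lia. Qed.

Lemma psum_ones w x : (forall y, y < x -> w y = 1) -> psum w x = x.
Proof.
elim: x => //= x IH w1; rewrite IH ?w1 ?addn1 // => y yx; apply: w1; lia.
Qed.

Fixpoint block_start J x : nat :=
  if x is y.+1 then (if J y == 1 then x else block_start J y) else 0.

Lemma block_start_le J x : block_start J x <= x.
Proof. by elim: x => //= x IH; case: ifP => // _; apply: leqW. Qed.

Lemma block_start_gap J x l : block_start J x <= l < x -> J l != 1.
Proof.
elim: x => [|x IH] /=; first lia.
case: ifP => Jx; first lia.
case/andP=> bl; rewrite ltnS leq_eqVlt => /predU1P[->|lx]; first by rewrite Jx.
by apply: IH; rewrite bl.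
Qed.

Lemma block_start_min J k x : (forall l, k <= l < x -> J l != 1) -> k <= x ->
  block_start J x <= k.
Proof.
elim: x => [|x IH] J1 //; rewrite leq_eqVlt ltnS => /predU1P[<-|kx] /=.
  exact: block_start_le.
rewrite ifN; last by apply: J1; rewrite kx ltnSn.
apply: IH kx => l /andP[kl lx].
by apply: J1; rewrite kl; lia.
Qed.

Lemma block_start_last J x : block_start J x = 0 \/ J (block_start J x).-1 = 1.
Proof. by elim: x => [|x IH] /=; [left|case: ifP => [/eqP|]; [right|]]. Qed.

End PrefixSums.

Section Covering.
Variables U J : nat -> nat.
Implicit Types (s t i k l x : nat).

Definition covered s := forall i, i < s -> J i = 1 ->
  exists k, [/\ k <= i, U k = 1 & forall l, k <= l < i -> J l = 0].

Definition spare s := exists k, [/\ k < s, U k = 1 & forall l, k <= l < s -> J l = 0].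

Lemma coveredS t : covered t.+1 <-> covered t /\ (J t = 1 -> U t = 1 \/ spare t).
Proof.
split=> [cov | [cov top] i].
  split=> [i it|Jt]; first by apply: cov; lia.
  have [k [kt Uk J0]] := cov t (ltnSn t) Jt.
  have [{}kt|<-] : k < t \/ k = t by lia.
  - by right; exists k.
  - by left.
rewrite ltnS leq_eqVlt => /predU1P[-> Jt|/cov//].
case: (top Jt) => [Ut|[k [kt Uk J0]]]; first by exists t; split=> //; lia.
by exists k; split=> //; lia.
Qed.

Lemma spareS t : spare t.+1 <-> J t = 0 /\ (U t = 1 \/ spare t).
Proof.
split=> [[k [kt Uk J0]] | [Jt [Ut|[k [kt Uk J0]]]]].
- split; first by apply: J0; lia.
  have [{}kt|<-] : k < t \/ k = t by lia.
  - by right; exists k; split=> // l /andP[kl lt]; apply: J0; lia.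
  - by left.
- by exists t; split=> // l lt; have -> : l = t by lia.
- exists k; split=> [||l /andP[kl]]; [lia|by []|].
  by rewrite ltnS leq_eqVlt => /predU1P[->|lt] //; apply: J0; rewrite kl.
Qed.

Lemma spare_last s : spare s -> exists t, s = t.+1 /\ J t = 0.
Proof.
by case: s => [[k [//]]|t [k [kt _ J0]]]; exists t; split=> //; apply: J0; lia.
Qed.

Lemma covered_psum (J01 : forall x, J x <= 1) s :
  covered s -> forall x, x <= s -> psum J x <= psum U x.
Proof.
move=> cov.
suff strict x : x <= s -> psum J x <= psum U x /\
  ((exists k, block_start J x <= k < x /\ U k = 1) -> psum J x < psum U x).
  by move=> x /strict[].
elim: x => [|x IH] xs; first by split=> // -[k []]; lia.
have [le lt] := IH (ltnW xs); rewrite /=.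
have strict_at k : block_start J x <= k < x.+1 -> U k = 1 -> psum J x < psum U x + U x.
  case/andP=> bk; rewrite ltnS leq_eqVlt => /predU1P[->|kx] Uk; first by rewrite Uk; lia.
  suff : psum J x < psum U x by lia.
  by apply: lt; exists k; rewrite bk kx.
case: (eqVneq (J x) 1) => Jx.
  rewrite Jx; split=> [|[k []]]; last lia.
  have [k [kx Uk J0]] := cov x xs Jx.
  suff : psum J x < psum U x + U x by lia.
  apply: (strict_at k) Uk; rewrite (leq_ltn_trans kx (ltnSn x)) andbT.
  by apply: block_start_min => [l /J0 ->|].
have -> : J x = 0 by have := J01 x; move: Jx; lia.
rewrite addn0; split=> [|[k [/strict_at]]]; [lia|exact].
Qed.

End Covering.

Definition zeros_below (U : nat -> nat) (s : nat) : seq nat :=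
  rev [seq x <- iota 0 s | U x == 0].

Lemma zeros_belowS U s :
  zeros_below U s.+1 = if U s == 0 then s :: zeros_below U s else zeros_below U s.
Proof.
rewrite /zeros_below -addn1 iotaD filter_cat /= add0n.
by case: ifP => _; rewrite ?cats1 ?cats0 ?rev_rcons.
Qed.

Definition gap1 (p : nat * nat) : bool := p.1 - p.2 <= 1.

Lemma bigmax_mem (c : seq nat) : c != [::] -> \max_(k <- c) k \in c.
Proof.
elim: c => // x [|y c] IH _; first by rewrite big_seq1 mem_head.
rewrite big_cons /maxn; case: ifP => _; last by rewrite mem_head.
by rewrite in_cons IH ?orbT.
Qed.

Lemma gmatch_cons_max i zv zw y : y \in zw -> y <= i ->
  (forall z, z \in zw -> z <= i -> z <= y) ->
  gmatch (i :: zv) zw = (i, y) :: gmatch zv (rem y zw).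
Proof.
move=> yw yi ymax /=.
have yc : y \in [seq z <- zw | z <= i] by rewrite mem_filter yi.
case E: [seq z <- zw | z <= i] => [|z c]; first by rewrite E in yc.
suff -> : \max_(k <- z :: c) k = y by [].
rewrite -E; apply/eqP; rewrite eqn_leq (leq_bigmax_seq _ yc) // andbT.
by apply/bigmax_leqP_seq => x; rewrite mem_filter => /andP[xi xw] _; apply: ymax.
Qed.

Lemma gmatch_cons_gap1 i zv zw : all gap1 (gmatch (i :: zv) zw) ->
  {in zw, forall z, i < z} \/ exists2 y, y \in zw & y <= i <= y.+1.
Proof.
rewrite /=; case E: [seq z <- zw | z <= i] => [|z c].
  left=> x xw; rewrite ltnNge; apply/negP => xi.
  have : x \in [seq z <- zw | z <= i] by rewrite mem_filter xi.
  by rewrite E.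
case/andP=> gap _; have := bigmax_mem (isT : z :: c != [::]).
set y := \max_(k <- z :: c) k; rewrite -E mem_filter => /andP[yi yw].
by right; exists y; rewrite // yi /=; rewrite /gap1 /= in gap; lia.
Qed.

Section GreedyMatching.
Variables U J : nat -> nat.
Hypothesis J01 : forall x, J x <= 1.
Implicit Types (s t x : nat) (e : bool) (zv zw : seq nat).

(* [zw] holds the zeros of [J] below [s] not yet matched, except that the
   flag [e] records that [s - 1] has already been matched (to [s]). *)
Definition pending s e zw :=
  [/\ uniq zw, e -> (0 < s) && (J s.-1 == 0) &
      forall x, x < s -> (x \in zw) = (J x == 0) && ~~ (e && (x.+1 == s))].

Lemma pending_init s : pending s false (zeros_below J s).
Proof.
split=> // [|x xs]; first by rewrite rev_uniq filter_uniq // iota_uniq.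
by rewrite mem_rev mem_filter mem_iota xs andbT.
Qed.

Lemma pending_top s e zw : pending s.+1 e zw -> (s \in zw) = (J s == 0) && ~~ e.
Proof. by case=> _ _ ->; rewrite // eqxx andbT. Qed.

Lemma pending_keep s e zw : pending s.+1 e zw -> pending s false zw.
Proof.
case=> uz _ zwE; split=> // x xs; rewrite zwE; last lia.
by rewrite (_ : x.+1 == s.+1 = false) ?andbF //; apply/eqP; lia.
Qed.

Lemma pending_rem_top s e zw : pending s.+1 e zw -> pending s false (rem s zw).
Proof.
move=> st; have [uz _ _] := st; have [_ _ zwE] := pending_keep st.
split=> [||x xs]; rewrite ?rem_uniq //.
by rewrite (mem_rem_uniq _ uz) inE zwE // (_ : x != s) //; apply/eqP; lia.
Qed.

Lemma pending_rem_below t e zw : pending t.+2 e zw -> J t = 0 ->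
  pending t.+1 true (rem t zw).
Proof.
case=> uz _ zwE Jt; split=> [||x xt]; rewrite ?rem_uniq ?Jt //=.
rewrite (mem_rem_uniq _ uz) inE zwE; last lia.
rewrite (_ : x.+1 == t.+2 = false) ?andbF /=; last by apply/eqP; lia.
by rewrite eqSS; case: eqVneq => [->|]; rewrite ?andbF ?andbT.
Qed.

Lemma gmatch_self s e zv zw : pending s.+1 e zw -> J s = 0 -> ~~ e ->
  gmatch (s :: zv) zw = (s, s) :: gmatch zv (rem s zw).
Proof.
move=> st Js ne; apply: gmatch_cons_max => //.
by rewrite (pending_top st) Js ne.
Qed.

Lemma gmatch_shift t e zv zw : pending t.+2 e zw ->
  ~~ ((J t.+1 == 0) && ~~ e) -> J t = 0 ->
  gmatch (t.+1 :: zv) zw = (t.+1, t) :: gmatch zv (rem t zw).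
Proof.
move=> st top Jt; have [_ _ zwE] := st; apply: gmatch_cons_max => //.
- by rewrite zwE // Jt /= (_ : t.+1 == t.+2 = false) ?andbF //; apply/eqP; lia.
- move=> z zw_z; rewrite leq_eqVlt => /predU1P[zt|]; last by [].
  by move: zw_z; rewrite zt (pending_top st) (negbTE top).
Qed.

Lemma gmatch_gap1_of_covered s e zw : pending s e zw ->
  covered U J s -> (e -> spare U J s) -> all gap1 (gmatch (zeros_below U s) zw).
Proof.
elim: s e zw => [|t IH] e zw st cov sp; first by [].
have [covt top] := (coveredS U J t).1 cov.
rewrite zeros_belowS; case: eqP => Ut; last exact: IH (pending_keep st) covt _.
case: (boolP ((J t == 0) && ~~ e)) => [/andP[/eqP Jt ne]|shift].
  by rewrite (gmatch_self _ st Jt ne) /= /gap1 subnn (IH _ _ (pending_rem_top st)).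
have spt : spare U J t.
  case: (boolP e) shift => [ee _|ne].
    by have [_ [|//]] := (spareS U J t).1 (sp ee); rewrite Ut.
  rewrite /= andbT => Jt; have /top[Ut1|//] : J t = 1 by have := J01 t; lia.
  by rewrite Ut in Ut1.
have [t' [tE Jt']] := spare_last spt; subst t.
rewrite (gmatch_shift _ st shift Jt') /= /gap1 subSnn /=.
exact: IH (pending_rem_below st Jt') covt (fun _ => spt).
Qed.

Lemma covered_of_gmatch_gap1 (U01 : forall x, U x <= 1) s e zw : pending s e zw ->
  all gap1 (gmatch (zeros_below U s) zw) ->
  (forall x, x <= s -> psum J x <= psum U x) -> (e -> psum J s < psum U s) ->
  covered U J s /\ (e -> spare U J s).
Proof.
elim: s e zw => [|t IH] e zw st ok dom lt_e; first by split=> [i //|/lt_e].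
have [_ eJ zwE] := st.
have Jt_e : e -> J t = 0 by move/eJ => /andP[_ /eqP].
have domt x : x <= t -> psum J x <= psum U x by move=> xt; apply: dom; lia.
move: ok; rewrite zeros_belowS; case: eqP => Ut ok; last first.
  have Ut1 : U t = 1 by have := U01 t; lia.
  have [covt _] := IH false zw (pending_keep st) ok domt ltac:(by []).
  split=> [|/Jt_e Jt]; first by apply/(coveredS U J); split=> // _; left.
  by apply/(spareS U J); split=> //; left.
case: (boolP ((J t == 0) && ~~ e)) => [/andP[/eqP Jt ne]|shift].
  move: ok; rewrite (gmatch_self _ st Jt ne) => /andP[_ ok].
  have [covt _] := IH false _ (pending_rem_top st) ok domt ltac:(by []).
  split=> [|ee]; last by rewrite ee in ne.
  by apply/(coveredS U J); split=> //; rewrite Jt.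
have lt : psum J t < psum U t.
  case: (boolP e) shift => [ee _|ne].
    by have := lt_e ee; rewrite /= Ut (Jt_e ee) !addn0.
  rewrite /= andbT => Jt; have := dom t.+1 (leqnn _); have := J01 t.
  by rewrite /= Ut; lia.
case: (gmatch_cons_gap1 ok) => [above|[y yw /andP[yt ty]]].
  have ones x : x < t -> J x = 1.
    move=> xt; have := above x; rewrite zwE; last lia.
    rewrite (_ : x.+1 == t.+1 = false) ?andbF ?andbT; last by apply/eqP; lia.
    by case: eqP => [_ /(_ isT)|Jx _]; [lia|have := J01 x; lia].
  by have := psum_ones ones; have := psum_le_len t U01; lia.
have ty' : y != t by apply: contraTneq yw => ->; rewrite (pending_top st) (negbTE shift).
have tE : t = y.+1 by lia.
subst t; have Jy : J y = 0 by move: yw; rewrite zwE //; case/andP => /eqP.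
move: ok; rewrite (gmatch_shift _ st shift Jy) => /andP[_ ok].
have [covy /(_ isT) spy] := IH true _ (pending_rem_below st Jy) ok domt (fun _ => lt).
split=> [|/Jt_e Jt]; first by apply/(coveredS U J); split=> // _; right.
by apply/(spareS U J); split=> //; right.
Qed.

Lemma dominated_gmatch_covered (U01 : forall x, U x <= 1) s :
  (forall x, x <= s -> psum J x <= psum U x) /\
    all gap1 (gmatch (zeros_below U s) (zeros_below J s)) <-> covered U J s.
Proof.
split=> [[dom ok]|cov].
  by have [] := covered_of_gmatch_gap1 U01 (pending_init s) ok dom ltac:(by []).
split; first exact: covered_psum.
exact: gmatch_gap1_of_covered (pending_init s) cov _.
Qed.

End GreedyMatching.

Definition nchi (w : nat -> nat) (x : nat) : nat := (0 < w x).

Lemma nchi_le1 w x : nchi w x <= 1.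
Proof. by rewrite /nchi; case: (0 < w x). Qed.

Lemma nchiE w x : (nchi w x == 1) = (0 < w x).
Proof. by rewrite /nchi; case: (0 < w x). Qed.

Section AdmissibleDemands.
Variable A : nat -> nat.
Implicit Types (B J : nat -> nat) (n x : nat).

(* The spine arc leaving [(x, 0)] carries [psum A x.+1 - psum B x.+1];
   unsplittability forbids it to be positive when [B x] is. *)
Definition admissible B n := forall x, x < n ->
  psum B x.+1 <= psum A x.+1 /\ (B x = 0 \/ psum B x.+1 = psum A x.+1).

Lemma eq_admissible B B' n : (forall x, x < n -> B x = B' x) ->
  admissible B n -> admissible B' n.
Proof.
move=> BE adm x xn; rewrite -(@eq_psum B) -?BE //; first exact: adm.
by move=> y yx; apply: BE; lia.
Qed.

Lemma admissible_covered B n : admissible B n -> covered (nchi A) (nchi B) n.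
Proof.
move=> adm i iN /eqP; rewrite nchiE => Bi.
pose q := block_start (nchi B) i.
have qi : q <= i := block_start_le _ i.
have tight_q : psum B q = psum A q.
  have [-> //|] : q = 0 \/ nchi B q.-1 = 1 := block_start_last (nchi B) i.
  case E: q => [//|p] /= /eqP; rewrite nchiE => Bp.
  have pi : p < i by rewrite -E.
  by have [_ [Bp0|]] := adm p (ltn_trans pi iN); [lia|].
have B0 l : q <= l < i -> B l = 0.
  by move/block_start_gap; rewrite nchiE lt0n negbK => /eqP.
have [_ [|tight_i]] := adm i iN; first lia.
have : psum A q < psum A i.+1.
  by rewrite -tight_i -tight_q /= (psum_null_range B0 qi); lia.
case/psum_lt_witness=> k [/andP[qk ki] Ak].
exists k; split; [lia| by apply/eqP; rewrite nchiE |].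
move=> l /andP[kl li]; have : nchi B l != 1.
  by apply: (@block_start_gap _ i); rewrite -/q; apply/andP; split; lia.
by rewrite /nchi; case: (0 < B l).
Qed.

Lemma admissible_eq B B' n : admissible B n -> admissible B' n ->
  (forall x, x < n -> (0 < B x) = (0 < B' x)) -> forall x, x < n -> B x = B' x.
Proof.
move=> adm adm' supp.
have psumE x : x <= n -> psum B x = psum B' x.
  elim: x => // x IH xn; have [_ tB] := adm x xn; have [_ tB'] := adm' x xn.
  move: tB tB' (supp x xn); rewrite /= IH ?(ltnW xn) //.
  by case: (posnP (B x)) => [->|Bx]; case: (posnP (B' x)) => [->|B'x] //=; lia.
by move=> x xn; have := psumE x (ltnW xn); have := psumE x.+1 xn; rewrite /=; lia.
Qed.

Definition demand J x : nat :=
  if J x == 1 then psum A x.+1 - psum A (block_start J x) else 0.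

Lemma psum_demand J x : psum (demand J) x = psum A (block_start J x).
Proof.
elim: x => //= x IH; rewrite IH /demand; case: eqP => _; last by rewrite addn0.
by have := leq_psum A (leqW (block_start_le J x)); rewrite /=; lia.
Qed.

Lemma demand_admissible J n : admissible (demand J) n.
Proof.
move=> x _; rewrite !psum_demand; split; first exact/leq_psum/block_start_le.
by rewrite /demand /=; case: eqP; [right|left].
Qed.

Lemma demand_pos J n : covered (nchi A) J n ->
  forall x, x < n -> (0 < demand J x) = (J x == 1).
Proof.
move=> cov x xn; rewrite /demand; case: eqP => // Jx.
have [k [kx /eqP Ak J0]] := cov x xn Jx; rewrite nchiE in Ak.
have qk : block_start J x <= k by apply: block_start_min => // l /J0 ->.
have := leq_psum A qk; have := leq_psum A (kx : k < x.+1).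
by rewrite /= subn_gt0; lia.
Qed.

End AdmissibleDemands.

Section OrdinalVectors.
Variable m : nat.
Implicit Types v w : 'I_m.+1 -> nat.

Definition natf v (x : nat) : nat := v (inord x).

Lemma sum_natf v : \sum_(i < m.+1) v i = psum (natf v) m.+1.
Proof. by rewrite psum_sum; apply: eq_bigr => i _; rewrite /natf inord_val. Qed.

Lemma prefix_sum_natf v (i : 'I_m.+1) :
  \sum_(k < m.+1 | k <= i) v k = psum (natf v) i.+1.
Proof.
rewrite psum_sum (big_ord_widen m.+1 (natf v) (ltn_ord i)).
by apply: eq_big => [k|k _]; rewrite ?ltnS // /natf inord_val.
Qed.

Lemma domE v w :
  dom v w <-> forall x, x <= m.+1 -> psum (natf w) x <= psum (natf v) x.
Proof.
split=> [domvw [|x] // xm|le i]; last by rewrite !prefix_sum_natf; apply: le.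
by have := domvw (inord x); rewrite !prefix_sum_natf inordK.
Qed.

Lemma zeros_decE v : zeros_dec v = zeros_below (natf v) m.+1.
Proof.
rewrite /zeros_dec /zeros_below -val_enum_ord filter_map; congr (rev (map _ _)).
by apply: eq_filter => i /=; rewrite /natf inord_val.
Qed.

Lemma dom1_chi_covered v w : (forall i, w i <= 1) ->
  dom1 (chi v) w <-> covered (nchi (natf v)) (natf w) m.+1.
Proof.
move=> w01; have natf01 x : natf w x <= 1 by apply: w01.
have chiwE x : natf (chi w) x = natf w x.
  by rewrite /natf /chi; have := w01 (inord x); case: (w _) => [|[]].
have chichiE x : natf (chi (chi v)) x = natf (chi v) x.
  by rewrite /natf /chi; case: (0 < v _).
rewrite -(dominated_gmatch_covered natf01 (nchi_le1 _)).
split=> [[/domE le _ ok]|[le ok]].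
  by split=> //; apply/allP => p pm; apply: ok; rewrite /matchM !zeros_decE.
split=> [||p]; [exact/domE|apply/domE => x xm|].
  by rewrite (eq_psum (fun y _ => chiwE y)) (eq_psum (fun y _ => chichiE y)); apply: le.
by rewrite /matchM !zeros_decE => /(allP ok).
Qed.

End OrdinalVectors.

Section SupportedSums.
Local Open Scope ring_scope.
Variables (R : realType) (V : finType) (F : V -> R) (P : pred V).
Hypothesis F0 : forall w, ~~ P w -> F w = 0.

Lemma sum_supp1 w0 : (forall w, P w -> w = w0) -> \sum_w F w = F w0.
Proof.
move=> Pw0; rewrite (bigD1 w0) //= big1 ?addr0 // => w ne; apply: F0.
by apply: contra ne => /Pw0 ->.
Qed.

Lemma sum_supp2 w0 w1 : w0 != w1 -> (forall w, P w -> w = w0 \/ w = w1) ->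
  \sum_w F w = F w0 + F w1.
Proof.
move=> n01 Pw01; rewrite (bigD1 w0) //= (bigD1 w1) 1?eq_sym //= big1 ?addr0 //.
by move=> w Hw; apply: F0; apply/negP => /Pw01[] e; rewrite e eqxx ?andbF in Hw.
Qed.

End SupportedSums.

Section TopGraph.
Variable m : nat.
Local Notation V := (Hvert m.+1).
Implicit Types (x y : nat) (u w : V).

Definition src x : V := Some (inord x, Ordinal (isT : 0 < 3)).
Definition hub x : V := Some (inord x, Ordinal (isT : 1 < 3)).
Definition snk x : V := Some (inord x, Ordinal (isT : 2 < 3)).
Definition next x : V := if x == m then None else hub x.+1.

Lemma HvertP u : u = None \/
  exists2 x, x < m.+1 & [\/ u = src x, u = hub x | u = snk x].
Proof.
case: u => [[i k]|]; last by left.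
right; exists i => //; rewrite /src /hub /snk inord_val.
by case: k => [[|[|[|//]]] k3]; [apply: Or31|apply: Or32|apply: Or33];
  congr (Some (_, _)); apply: val_inj.
Qed.

Lemma next_lt x : x < m -> next x = hub x.+1.
Proof. by rewrite /next => xm; case: eqP => //; lia. Qed.

Lemma vert_inj x y (k k' : 'I_3) : x < m.+1 -> y < m.+1 ->
  Some (inord x, k) = Some (inord y, k') :> V -> x = y /\ k = k'.
Proof. by move=> xm ym [/(congr1 val)]; rewrite /= !inordK. Qed.

Lemma arc_cases u w : Harc u w -> exists2 x, x < m.+1 &
  [\/ u = src x /\ w = hub x, u = hub x /\ w = snk x | u = hub x /\ w = next x].
Proof.
have [->//|[x xm [->|->|->]]] := HvertP u; have [->|[y ym [->|->|->]]] := HvertP w;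
  rewrite /Harc /= ?inordK // ?andbF ?andbT ?orbF //= => /eqP E; exists x => //.
- by move/(congr1 val): E; rewrite /= !inordK // => <-; apply: Or31.
- by apply: Or33; rewrite /next E eqxx.
- by apply: Or33; rewrite E next_lt //; lia.
- by move/(congr1 val): E; rewrite /= !inordK // => <-; apply: Or32.
Qed.

Lemma arc_src_hub x : Harc (src x) (hub x).
Proof. by rewrite /Harc /= eqxx. Qed.

Lemma arc_hub_snk x : Harc (hub x) (snk x).
Proof. by rewrite /Harc /= eqxx. Qed.

Lemma arc_hub_next x : x < m.+1 -> Harc (hub x) (next x).
Proof.
move=> xm; rewrite /next; case: eqP => [->|ne]; first by rewrite /Harc /= inordK.
by rewrite /Harc /= !inordK ?eqxx ?orbT //; lia.
Qed.

Lemma src_out x : x < m.+1 -> forall w, Harc (src x) w -> w = hub x.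
Proof.
by move=> xm w /arc_cases[y ym [[/(vert_inj xm ym)[<- _] ->]|[]|[]]].
Qed.

Lemma hub_out x : x < m.+1 -> forall w, Harc (hub x) w -> w = snk x \/ w = next x.
Proof.
move=> xm w /arc_cases[y ym [[]//|[/(vert_inj xm ym)[<- _] ->]|]]; first by left.
by case=> /(vert_inj xm ym)[<- _] ->; right.
Qed.

Lemma snk_out x w : ~~ Harc (snk x) w.
Proof. by apply/negP => /arc_cases[y ym [[]|[]|[]]]. Qed.

Lemma src_in x w : ~~ Harc w (src x).
Proof.
by apply/negP => /arc_cases[y ym [[_]|[_]|[_]]]; rewrite ?/next; try case: eqP.
Qed.

Lemma snk_in x : x < m.+1 -> forall w, Harc w (snk x) -> w = hub x.
Proof.
move=> xm w /arc_cases[y ym [[_]//|[-> /(vert_inj xm ym)[<-]]|[_]]] //.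
by rewrite /next; case: eqP.
Qed.

Lemma s_in : forall w, Harc w None -> w = hub m.
Proof.
by move=> w /arc_cases[y ym [[_]//|[_]//|[->]]]; rewrite /next; case: eqP => [->|].
Qed.

Lemma hub0_in : forall w, Harc w (hub 0) -> w = src 0.
Proof.
move=> w /arc_cases[y ym [[-> /(vert_inj (ltn0Sn m) ym)[<-]]|[_]//|[_]]] //.
rewrite /next; case: eqP => // ym' E; have ym1 : y.+1 < m.+1 by lia.
by have [] := vert_inj (ltn0Sn m) ym1 E.
Qed.

Lemma hubS_in x : x < m -> forall w, Harc w (hub x.+1) -> w = src x.+1 \/ w = hub x.
Proof.
move=> xm; have xm' : x.+1 < m.+1 by [].
move=> w /arc_cases[y ym [[-> /(vert_inj xm' ym)[<-]]|[_]//|[->]]]; first by left.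
rewrite /next; case: eqP => // ym' E; have ym1 : y.+1 < m.+1 by lia.
by have [[->]] := vert_inj xm' ym1 E; right.
Qed.

End TopGraph.

Section Netflow.
Local Open Scope ring_scope.
Variables (R : realType) (m : nat) (f : Hvert m.+1 -> Hvert m.+1 -> R).
Hypothesis f0 : forall u w, ~~ Harc u w -> f u w = 0.

Lemma netflow_src x : (x < m.+1)%N -> netflow f (src m x) = f (src m x) (hub m x).
Proof.
move=> xm; rewrite /netflow (sum_supp1 (@f0 _) (src_out xm)) big1 ?subr0 //.
by move=> w _; apply: f0; apply: src_in.
Qed.

Lemma netflow_snk x : (x < m.+1)%N -> netflow f (snk m x) = - f (hub m x) (snk m x).
Proof.
move=> xm; rewrite /netflow (sum_supp1 (fun w => @f0 w _) (snk_in xm)).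
by rewrite big1 ?sub0r // => w _; apply: f0; apply: snk_out.
Qed.

Lemma netflow_s : netflow f None = - f (hub m m) None.
Proof.
rewrite /netflow (sum_supp1 (fun w => @f0 w _) (@s_in m)) big1 ?sub0r //.
by move=> w _; apply: f0.
Qed.

Lemma out_hub x : (x < m.+1)%N ->
  \sum_w f (hub m x) w = f (hub m x) (snk m x) + f (hub m x) (next m x).
Proof.
move=> xm; apply: (sum_supp2 (@f0 _) _ (hub_out xm)).
by rewrite /next; case: ifP => // _; apply/negP => /eqP[_].
Qed.

Lemma netflow_hub0 : netflow f (hub m 0) =
  f (hub m 0) (snk m 0) + f (hub m 0) (next m 0) - f (src m 0) (hub m 0).
Proof. by rewrite /netflow out_hub // (sum_supp1 (fun w => @f0 w _) (@hub0_in m)). Qed.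

Lemma netflow_hubS x : (x < m)%N -> netflow f (hub m x.+1) =
  f (hub m x.+1) (snk m x.+1) + f (hub m x.+1) (next m x.+1)
  - (f (src m x.+1) (hub m x.+1) + f (hub m x) (hub m x.+1)).
Proof.
move=> xm; rewrite /netflow out_hub //.
by rewrite (sum_supp2 (fun w => @f0 w _) _ (hubS_in xm)) //; apply/negP => /eqP[].
Qed.

End Netflow.

Section TopFlows.
Local Open Scope ring_scope.
Variables (R : realType) (m : nat) (a b : 'I_m.+1 -> nat).
Local Notation A := (natf a).
Local Notation B := (natf b).
Local Notation is_Hflow := (is_flow (@Harc m.+1) (Hnet R a b)).
Local Notation is_Hunspl := (@Hunspl R m.+1 a b).

Lemma Hnet_src x : Hnet R a b (src m x) = (A x)%:R. Proof. by []. Qed.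
Lemma Hnet_hub x : Hnet R a b (hub m x) = 0. Proof. by []. Qed.
Lemma Hnet_snk x : Hnet R a b (snk m x) = - (B x)%:R. Proof. by []. Qed.

Lemma flow_values f : is_Hflow f -> forall x, (x < m.+1)%N ->
  [/\ f (src m x) (hub m x) = (A x)%:R, f (hub m x) (snk m x) = (B x)%:R &
      f (hub m x) (next m x) = (psum A x.+1)%:R - (psum B x.+1)%:R].
Proof.
case=> _ f0 net.
have srcE x : (x < m.+1)%N -> f (src m x) (hub m x) = (A x)%:R.
  by move=> xm; rewrite -netflow_src // net Hnet_src.
have snkE x : (x < m.+1)%N -> f (hub m x) (snk m x) = (B x)%:R.
  by move=> xm; apply: oppr_inj; rewrite -netflow_snk // net Hnet_snk.
move=> x xm; split; [exact: srcE|exact: snkE|].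
elim: x xm => [|x IH] xm.
  have := net (hub m 0); rewrite netflow_hub0 // srcE // snkE // Hnet_hub.
  by rewrite !psumS !add0n; lra.
have := net (hub m x.+1); rewrite netflow_hubS // srcE // snkE // Hnet_hub.
have := IH (ltnW xm); rewrite next_lt // => ->.
by rewrite [psum A x.+2]psumS [psum B x.+2]psumS !natrD; lra.
Qed.

Lemma flows_unique f g : is_Hflow f -> is_Hflow g -> f = g.
Proof.
move=> flow_f flow_g; apply: boolp.funext => u; apply: boolp.funext => w.
have [arc_uw|narc] := boolP (Harc u w); last first.
  by have [_ f0 _] := flow_f; have [_ g0 _] := flow_g; rewrite f0 // g0.
have [x xm [[-> ->]|[-> ->]|[-> ->]]] := arc_cases arc_uw;
  by have [? ? ?] := flow_values flow_f xm; have [? ? ?] := flow_values flow_g xm;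
     congruence.
Qed.

Lemma unsplittable_admissible f : is_Hunspl f -> admissible A B m.+1.
Proof.
case=> flow_f _ split_f _ x xm; have [_ snkE nextE] := flow_values flow_f xm.
have [f_ge0 _ _] := flow_f.
have := f_ge0 (hub m x) (next m x); rewrite nextE subr_ge0 ler_nat => le.
split=> //; case: (posnP (B x)) => [|Bx]; [by left|right].
apply/eqP; rewrite eqn_leq le /= leqNgt -(ltr_nat R) -subr_gt0 -nextE.
apply/negP => pos; have := split_f _ _ _ (arc_hub_snk m x) (arc_hub_next xm).
rewrite snkE ltr0n Bx => /(_ isT pos) snk_next.
by move: snk_next; rewrite /next; case: ifP => // _ [_].
Qed.

Definition spine_flow (i : nat) : R := (psum A i.+1 - psum B i.+1)%:R.

Definition Hflow (u w : Hvert m.+1) : R :=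
  if Harc u w then
    match u, w with
    | Some (i, k), Some (_, k') =>
        if val k == 0%N then (a i)%:R
        else if val k' == 2%N then (b i)%:R else spine_flow i
    | Some (i, _), None => spine_flow i
    | None, _ => 0
    end
  else 0.

Lemma Hflow_src x : Hflow (src m x) (hub m x) = (A x)%:R.
Proof. by rewrite /Hflow arc_src_hub. Qed.

Lemma Hflow_snk x : Hflow (hub m x) (snk m x) = (B x)%:R.
Proof. by rewrite /Hflow arc_hub_snk. Qed.

Lemma Hflow_next x : (x < m.+1)%N -> Hflow (hub m x) (next m x) = spine_flow x.
Proof.
move=> xm; rewrite /Hflow arc_hub_next // /next.
by case: ifP => _; rewrite /= /spine_flow inordK.
Qed.

Lemma Hflow_nat u w : exists k : nat, Hflow u w = k%:R.
Proof.
rewrite /Hflow; case: ifP => _; last by exists 0%N.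
case: u => [[i k]|]; last by exists 0%N.
by case: w => [[j k']|]; [case: ifP => _; [|case: ifP => _]|]; eexists.
Qed.

Hypothesis adm : admissible A B m.+1.

Lemma spine_flowE x : (x < m.+1)%N ->
  spine_flow x = (psum A x.+1)%:R - (psum B x.+1)%:R.
Proof. by move=> xm; rewrite /spine_flow natrB //; case: (adm xm). Qed.

Lemma Hflow_flow : is_Hflow Hflow.
Proof.
have f0 u w : ~~ Harc u w -> Hflow u w = 0 by move/negbTE => arc0; rewrite /Hflow arc0.
split=> // [u w|v]; first by have [k ->] := Hflow_nat u w.
have [->|[x xm [->|->|->]]] := HvertP v.
- rewrite netflow_s //; have := Hflow_next (ltnSn m); rewrite /next eqxx => ->.
  by rewrite spine_flowE // /Hnet !sum_natf; lra.
- by rewrite netflow_src // Hflow_src.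
- case: x xm => [|x] xm.
    rewrite netflow_hub0 // Hflow_src Hflow_snk Hflow_next // spine_flowE //.
    by rewrite Hnet_hub !psumS !add0n; lra.
  rewrite netflow_hubS // Hflow_src Hflow_snk Hflow_next // spine_flowE // Hnet_hub.
  have := Hflow_next (ltnW xm); rewrite next_lt // spine_flowE 1?ltnW // => ->.
  by rewrite [psum A x.+2]psumS [psum B x.+2]psumS !natrD; lra.
- by rewrite netflow_snk // Hflow_snk.
Qed.

Lemma Hflow_hub_unsplit x : (x < m.+1)%N ->
  0 < Hflow (hub m x) (snk m x) -> 0 < Hflow (hub m x) (next m x) -> False.
Proof.
move=> xm; rewrite Hflow_snk Hflow_next // spine_flowE // ltr0n subr_gt0 ltr_nat.
by case: (adm xm) => _ [->|->]; rewrite ?ltnn.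
Qed.

Lemma admissible_unsplittable : is_Hunspl Hflow.
Proof.
split; [exact: Hflow_flow|exact: Hflow_nat| |].
- move=> v w1 w2 arc1 arc2.
  have [x xm [[vE _]|[vE _]|[vE _]]] := arc_cases arc1; subst v;
    [by rewrite (src_out xm arc1) (src_out xm arc2)|..];
    have [->|->] := hub_out xm arc1; have [->|->] := hub_out xm arc2 => // p q;
    first [by case: (Hflow_hub_unsplit xm p q) | by case: (Hflow_hub_unsplit xm q p)].
- move=> v w + /arc_cases[x xm [[vE _]|[vE _]|[vE _]]]; subst v.
  all: by rewrite ?Hnet_src ?Hnet_hub ?ltrn0 ?ltxx.
Qed.

End TopFlows.

Theorem lemma5p12 (R : realType) (n : nat) (hn : (0 < n)%N) (a : 'I_n -> nat) :
  (forall j : 'I_n -> nat, (forall i, (j i <= 1)%N) -> dom1 (chi a) j ->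
     exists b : 'I_n -> nat,
       [/\ chi b =1 j,
           (exists! f : Hvert n -> Hvert n -> R, Hunspl a b f)
         & forall b' : 'I_n -> nat, chi b' =1 j ->
             (exists f : Hvert n -> Hvert n -> R, Hunspl a b' f) -> b' =1 b])
  /\
  (forall b : 'I_n -> nat, ~ dom1 (chi a) (chi b) ->
     forall f : Hvert n -> Hvert n -> R, ~ Hunspl a b f).
Proof.
case: n hn a => [//|m] _ a.
split=> [j j01 /(dom1_chi_covered a j01) cov|b not_dom f /unsplittable_admissible adm].
  pose b (i : 'I_m.+1) := demand (natf a) (natf j) i.
  have adm : admissible (natf a) (natf b) m.+1.
    have bE x : (x < m.+1)%N -> demand (natf a) (natf j) x = natf b x.
      by move=> xm; rewrite [RHS]/natf /b inordK.
    exact: eq_admissible bE (@demand_admissible _ _ m.+1).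
  have chi_b : chi b =1 j.
    move=> i; rewrite /chi /b (demand_pos cov (ltn_ord i)) /natf inord_val.
    by have := j01 i; case: (j i) => [|[|]].
  exists b; split=> //.
    exists (Hflow R a b); split; first exact: admissible_unsplittable.
    by move=> g [flow_g _ _ _]; apply: flows_unique (Hflow_flow R adm) flow_g.
  move=> b' chi_b' [f /unsplittable_admissible adm'] i.
  have := admissible_eq adm' adm _ (ltn_ord i); rewrite /natf inord_val; apply=> x _.
  by have := chi_b' (inord x); rewrite -chi_b /chi; do 2!case: (0 < _).
apply: not_dom; apply/(dom1_chi_covered a) => [i|].
  by rewrite /chi; case: (0 < b i).
exact: admissible_covered adm.
Qed.
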